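(* Let $K$ be an arbitrary valued field, $d\ge1$, and let $C\subseteq K^d$ be the convex hull of a finite set, with $0\in C$. Then there exist a complete flag of $K$-linear subspaces $\{0\}\subsetneq F_1\subsetneq\dots\subsetneq F_d=K^d$ and elements $\gamma_1\le\gamma_2\le\dots\le\gamma_d$ of $\Gamma\cup\{\infty\}$ such that $$C=\{v_1+\dots+v_d:\ v_i\in F_i,\ \nu_{K^d}(v_i)\ge\gamma_i\text{ for all } i\}.$$
   Context: $K$ is a field with valuation $\nu:K\to\Gamma\cup\{\infty\}$, valuation ring $\mathcal{O}$. On $K^d$, $\nu_{K^d}(x_1,\dots,x_d)=\min_i\nu(x_i)$. For $Y\subseteq K^d$, $\operatorname{conv}(Y)=\{\sum_{i=1}^n\alpha_iy_i: n\ge1, y_i\in Y,\alpha_i\in\mathcal{O},\sum_i\alpha_i=1\}$. *)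

From mathcomp Require Import all_boot all_order all_algebra.
Set Implicit Arguments. Unset Strict Implicit. Unset Printing Implicit Defensive.
Import GRing.Theory.
Local Open Scope ring_scope.

Record ordered_abelian_group (G : zmodType) (le : rel G) : Prop := {
  oag_refl : forall a, le a a;
  oag_antisym : forall a b, le a b -> le b a -> a = b;
  oag_trans : forall a b c, le a b -> le b c -> le a c;
  oag_total : forall a b, le a b || le b a;
  oag_add : forall a b c, le a b -> le (a + c) (b + c) }.

(* Gamma ∪ {∞} is modelled by option G, with None = ∞. *)
Definition leE (G : zmodType) (le : rel G) (x y : option G) : bool :=
  match x, y with
  | _, None => true
  | None, Some _ => false
  | Some a, Some b => le a b
  end.

Definition addE (G : zmodType) (x y : option G) : option G :=
  match x, y with
  | Some a, Some b => Some (a + b)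
  | _, _ => None
  end.

Definition minE (G : zmodType) (le : rel G) (x y : option G) : option G :=
  if leE le x y then x else y.

Record is_valuation (K : fieldType) (G : zmodType) (le : rel G)
    (nu : K -> option G) : Prop := {
  val_inf : forall x, nu x = None <-> x = 0;
  val_mul : forall x y, nu (x * y) = addE (nu x) (nu y);
  val_add : forall x y, leE le (minE le (nu x) (nu y)) (nu (x + y)) }.

Definition val_ring (K : fieldType) (G : zmodType) (le : rel G)
    (nu : K -> option G) (x : K) : Prop := leE le (Some 0) (nu x).

Definition nuKd (K : fieldType) (G : zmodType) (le : rel G)
    (nu : K -> option G) (d : nat) (v : 'rV[K]_d) : option G :=
  \big[minE le/None]_(i < d) nu (v 0 i).

Definition conv (K : fieldType) (G : zmodType) (le : rel G)
    (nu : K -> option G) (d : nat) (Y : 'rV[K]_d -> Prop) (v : 'rV[K]_d) : Prop :=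
  exists (n : nat) (y : 'I_n -> 'rV[K]_d) (alpha : 'I_n -> K),
    [/\ (1 <= n)%N, forall i, Y (y i), forall i, val_ring le nu (alpha i),
        \sum_(i < n) alpha i = 1 & v = \sum_(i < n) alpha i *: y i].

(* Write O for the valuation ring.  If 0 ∈ C = conv(S), then C is the
   O-submodule of K^d spanned by the differences s - s_0 (s ∈ S), so it
   suffices to decompose the O-span M of a finite family y along a flag.
   This is valuative Gaussian elimination: pick, among all coordinates of all
   generators, an entry y_{j0,k} of least valuation and let v0 = y_{j0}.
   Every generator y_j can be reduced to y_j - (y_{j,k}/y_{j0,k}) v0 with a
   coefficient in O, killing coordinate k, and M = O v0 + M' where M' is the
   O-span of the reduced generators.  By induction on the support, M' is a
   flag set for a complete flag of K^(J \ k); prepending the line K v0 with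
   radius nu(y_{j0,k}) gives one for M.  If all generators vanish we prepend
   a unit vector with radius ∞ instead. *)

From mathcomp Require Import all_boot all_order all_algebra.
Set Implicit Arguments. Unset Strict Implicit. Unset Printing Implicit Defensive.
Import GRing.Theory.
Local Open Scope ring_scope.

Section Valuation.
Variables (K : fieldType) (G : zmodType) (le : rel G) (nu : K -> option G).
Hypothesis HG : ordered_abelian_group le.
Hypothesis Hnu : is_valuation le nu.

Notation leE := (leE le).
Notation O := (val_ring le nu).

Lemma leE_refl x : leE x x.
Proof. by case: x => //= a; apply: (oag_refl HG). Qed.

Lemma leE_trans x y z : leE x y -> leE y z -> leE x z.
Proof. by case: x; case: y; case: z => //= c b a; apply: (oag_trans HG). Qed.

Lemma leE_total x y : leE x y || leE y x.
Proof. by case: x; case: y => //= b a; apply: (oag_total HG). Qed.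

Lemma leE_minE g a b : leE g (minE le a b) = leE g a && leE g b.
Proof.
rewrite /minE; case: ifP => hab; apply/idP/andP => [hg|[]//]; split=> //.
  exact: leE_trans hg hab.
by apply: leE_trans hg _; have := leE_total a b; rewrite hab.
Qed.

Lemma exists_min (T : finType) (f : T -> option G) (t0 : T) :
  exists t, forall t', leE (f t) (f t').
Proof.
suff [t ht] : exists t, forall t', t' \in t0 :: enum T -> leE (f t) (f t').
  by exists t => t'; apply: ht; rewrite inE mem_enum orbT.
elim: (enum T) => [|x s [t ht]].
  by exists t0 => t'; rewrite inE => /eqP ->; apply: leE_refl.
have ht0 : leE (f t) (f t0) by apply: ht; rewrite inE eqxx.
have hts s' : s' \in s -> leE (f t) (f s') by move=> hs; apply: ht; rewrite inE hs orbT.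
have [hx|hx] := orP (leE_total (f t) (f x)).
  by exists t => t'; rewrite !inE => /or3P [/eqP->|/eqP->|/hts].
exists x => t'; rewrite !inE => /or3P [/eqP->|/eqP->|/hts]; last 2 first.
- exact: leE_refl.
- exact: leE_trans.
exact: leE_trans hx ht0.
Qed.

Lemma exists_lower_bound (T : finType) (f : T -> option G) :
  exists b, forall t, leE b (f t).
Proof.
case: (pickP T) => [t0 _|T0]; first by have [t ht] := exists_min f t0; exists (f t).
by exists None => t; have := T0 t.
Qed.

Lemma addE_mono c a b : leE a b -> leE (addE c a) (addE c b).
Proof.
case: c; case: a; case: b => //= b a c hab.
by rewrite ![c + _]addrC; apply: (oag_add HG).
Qed.

Lemma addE_ge g a b : leE (Some 0) a -> leE g b -> leE g (addE a b).
Proof.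
case: a; case: b; case: g => //= g b a ha hb.
by apply: (oag_trans HG) hb _; have := oag_add HG b ha; rewrite add0r.
Qed.

Lemma double_eq0 (a : G) : a + a = 0 -> a = 0.
Proof.
move=> haa; have [h|h] := orP (oag_total HG 0 a);
  have := oag_add HG a h; rewrite add0r haa => h'; exact: (oag_antisym HG).
Qed.

Lemma nu_eq0 x : nu x = None <-> x = 0.
Proof. exact: (val_inf Hnu). Qed.

Lemma nu0 : nu 0 = None.
Proof. exact/nu_eq0. Qed.

Lemma nuM x y : nu (x * y) = addE (nu x) (nu y).
Proof. exact: (val_mul Hnu). Qed.

Lemma nu1 : nu 1 = Some 0.
Proof.
have := nuM 1 1; rewrite mulr1; case E: (nu 1) => [a|] /=.
  by move=> [haa]; congr Some; apply: (addrI a); rewrite addr0 -haa.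
by move/nu_eq0: E => /eqP; rewrite oner_eq0.
Qed.

Lemma nuN x : nu (- x) = nu x.
Proof.
have nuN1 : nu (-1) = Some 0.
  have := nuM (-1) (-1); rewrite mulrNN mulr1 nu1.
  by case: (nu (-1)) => //= a [/esym/double_eq0 ->].
by rewrite -mulN1r nuM nuN1; case: (nu x) => //= a; rewrite add0r.
Qed.

Lemma nuD g x y : leE g (nu x) -> leE g (nu y) -> leE g (nu (x + y)).
Proof. by move=> hx hy; apply: leE_trans (val_add Hnu x y); rewrite leE_minE hx hy. Qed.

Lemma val_ring_scale x l : x != 0 -> O l <-> leE (nu x) (nu (l * x)).
Proof.
move=> x0; rewrite /val_ring nuM; split.
  by move=> hl; apply: addE_ge hl (leE_refl _).
case E: (nu x) => [g|]; last by move/nu_eq0: E => /eqP; rewrite (negbTE x0).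
case: (nu l) => //= a h; have := oag_add HG (- g) h.
by rewrite subrr addrK.
Qed.

Lemma O0 : O 0. Proof. by rewrite /val_ring nu0. Qed.
Lemma O1 : O 1. Proof. by rewrite /val_ring nu1 /=; apply: (oag_refl HG). Qed.
Lemma OD a b : O a -> O b -> O (a + b). Proof. exact: nuD. Qed.
Lemma ON a : O a -> O (- a). Proof. by rewrite /val_ring nuN. Qed.
Lemma OB a b : O a -> O b -> O (a - b). Proof. by move=> ha hb; apply/OD/ON. Qed.
Lemma OM a b : O a -> O b -> O (a * b).
Proof. by rewrite /val_ring nuM; apply: addE_ge. Qed.
Lemma O_sum (I : finType) (P : pred I) (f : I -> K) :
  (forall i, O (f i)) -> O (\sum_(i | P i) f i).
Proof. by move=> hf; elim/big_ind: _ => //; [apply: O0|apply: OD]. Qed.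

End Valuation.

Section Balls.
Variables (K : fieldType) (G : zmodType) (le : rel G) (nu : K -> option G).
Hypothesis HG : ordered_abelian_group le.
Hypothesis Hnu : is_valuation le nu.
Variable d : nat.

Notation O := (val_ring le nu).
Implicit Types (g : option G) (J : {set 'I_d}) (c l : K) (u v x : 'rV[K]_d).

Definition ball g v := forall i, leE le g (nu (v 0 i)).

Definition supp (J : {set 'I_d}) v := forall i, i \notin J -> v 0 i = 0.

Definition ospan n (y : 'I_n -> 'rV[K]_d) v :=
  exists a : 'I_n -> K, (forall i, O (a i)) /\ v = \sum_i a i *: y i.

Lemma ball_nuKd g v : leE le g (nuKd le nu v) <-> ball g v.
Proof.
rewrite /nuKd (big_morph (leE le g) (id1 := true) (op1 := andb)); last first.
- by case: g.
- by move=> x y; rewrite (leE_minE HG).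
by rewrite big_andE; split => [/forallP|h]; last apply/forallP.
Qed.

Lemma ball0 g : ball g 0.
Proof. by move=> i; rewrite mxE (nu0 Hnu); case: g. Qed.

Lemma ballD g u v : ball g u -> ball g v -> ball g (u + v).
Proof. by move=> hu hv i; rewrite mxE; apply: (nuD HG Hnu). Qed.

Lemma ballB g u v : ball g u -> ball g v -> ball g (u - v).
Proof. by move=> hu hv; apply: ballD => // i; rewrite mxE (nuN HG Hnu). Qed.

Lemma ballZ g c v : O c -> ball g v -> ball g (c *: v).
Proof. by move=> hc hv i; rewrite mxE (nuM Hnu); apply: (addE_ge HG). Qed.

Lemma ball_sum g (I : finType) (P : pred I) (f : I -> 'rV[K]_d) :
  (forall i, ball g (f i)) -> ball g (\sum_(i | P i) f i).
Proof. by move=> hf; elim/big_ind: _ => //; [apply: ball0|apply: ballD]. Qed.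

Lemma ball_le g g' v : leE le g' g -> ball g v -> ball g' v.
Proof. by move=> hg hv i; apply: (leE_trans HG) hg (hv i). Qed.

Lemma ball_None v : ball None v <-> v = 0.
Proof.
split=> [hv|->]; last exact: ball0.
apply/matrixP => i j; rewrite ord1 mxE; apply/(nu_eq0 Hnu).
by have := hv j; case: (nu _).
Qed.

Lemma ball_pivot g l v0 (k : 'I_d) :
  (forall i, leE le (nu (v0 0 k)) (nu (v0 0 i))) ->
  ball g (l *: v0) <-> leE le g (nu (l * v0 0 k)).
Proof.
move=> hk; split=> [/(_ k)|hg i]; first by rewrite mxE.
rewrite mxE; apply: (leE_trans HG) hg _.
by rewrite !(nuM Hnu); apply: (addE_mono HG).
Qed.

Lemma supp0 J : supp J 0.
Proof. by move=> i _; rewrite mxE. Qed.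

Lemma supp_set0 v : supp set0 v -> v = 0.
Proof. by move=> hv; apply/matrixP => i j; rewrite ord1 mxE hv ?in_set0. Qed.

Lemma supp_line J J' c v0 u : J' \subset J ->
  supp J v0 -> supp J' u -> supp J (c *: v0 + u).
Proof.
move=> sJ' hv0 hu i hi; rewrite !mxE hv0 ?hu ?mulr0 ?addr0 //.
by apply: contra hi; apply: (subsetP sJ').
Qed.

Lemma supp_reduce J (k : 'I_d) x v0 : supp J x -> supp J v0 -> v0 0 k != 0 ->
  supp (J :\ k) (x - (x 0 k / v0 0 k) *: v0).
Proof.
move=> hx hv0 hv0k i; rewrite in_setD1 negb_and negbK => /orP [/eqP ->|hi].
  by rewrite !mxE divfK // subrr.
by rewrite !mxE (hx i hi) (hv0 i hi) mulr0 subrr.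
Qed.

Section OSpan.
Variables (n : nat) (y : 'I_n -> 'rV[K]_d).

Lemma ospan0 : ospan y 0.
Proof.
exists (fun _ => 0); split=> [i|]; first exact: (O0 Hnu).
by rewrite big1 // => i _; rewrite scale0r.
Qed.

Lemma ospanD u v : ospan y u -> ospan y v -> ospan y (u + v).
Proof.
move=> [a [ha ->]] [b [hb ->]]; exists (fun i => a i + b i); split.
  by move=> i; apply: (OD HG Hnu).
by rewrite -big_split; apply: eq_bigr => i _; rewrite scalerDl.
Qed.

Lemma ospanZ c v : O c -> ospan y v -> ospan y (c *: v).
Proof.
move=> hc [a [ha ->]]; exists (fun i => c * a i); split.
  by move=> i; apply: (OM HG Hnu).
by rewrite scaler_sumr; apply: eq_bigr => i _; rewrite scalerA.
Qed.

Lemma ospan_gen j : ospan y (y j).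
Proof.
exists (fun i => (i == j)%:R); split.
  by move=> i; case: (i == j); [apply: (O1 HG Hnu)|apply: (O0 Hnu)].
rewrite (bigD1 j) //= eqxx scale1r big1 ?addr0 // => i /negbTE ->.
by rewrite scale0r.
Qed.

Lemma ospan_sub p (x : 'I_p -> 'rV[K]_d) v :
  (forall i, ospan y (x i)) -> ospan x v -> ospan y v.
Proof.
move=> hx [a [ha ->]]; elim/big_ind: _ => //; first exact: ospan0.
  exact: ospanD.
by move=> i _; apply: ospanZ.
Qed.

Lemma ospan_reduce j0 (c : 'I_n -> K) v : (forall j, O (c j)) ->
  ospan y v <-> exists l m, [/\ O l, ospan (fun j => y j - c j *: y j0) m
                              & v = l *: y j0 + m].
Proof.
move=> hc; split=> [[a [ha ->]]|[l [m [hl hm ->]]]].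
  exists (\sum_j a j * c j), (\sum_j a j *: (y j - c j *: y j0)); split.
  - by apply: (O_sum HG Hnu) => j; apply: (OM HG Hnu).
  - by exists a.
  rewrite scaler_suml -big_split; apply: eq_bigr => j _ /=.
  by rewrite scalerBr scalerA addrC subrK.
apply: ospanD; first by apply: ospanZ => //; apply: ospan_gen.
apply: ospan_sub hm => j; rewrite -scaleNr; apply: ospanD; first exact: ospan_gen.
by apply: ospanZ; [apply: (ON HG Hnu)|apply: ospan_gen].
Qed.

End OSpan.

End Balls.

Section ConvexHull.
Variables (K : fieldType) (G : zmodType) (le : rel G) (nu : K -> option G).
Hypothesis HG : ordered_abelian_group le.
Hypothesis Hnu : is_valuation le nu.
Variable d : nat.

Notation O := (val_ring le nu).

Lemma sum_eq1_gt0 n (a : 'I_n -> K) : \sum_i a i = 1 -> (0 < n)%N.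
Proof. by case: n a => // a; rewrite big_ord0 => /eqP; rewrite eq_sym oner_eq0. Qed.

Lemma conv_nth (S : seq 'rV[K]_d) v :
  conv le nu (fun x => x \in S) v <-> exists a : 'I_(size S) -> K,
    [/\ forall i, O (a i), \sum_i a i = 1 & v = \sum_i a i *: nth 0 S i].
Proof.
split=> [[n [x [al [_ hx hal hsum ->]]]]|[a [ha hs ->]]]; last first.
  exists (size S), (fun i => nth 0 S i), a; split=> //; last by move=> i; apply: mem_nth.
  exact: sum_eq1_gt0 hs.
have xS j : (index (x j) S < size S)%N by rewrite index_mem.
pose p j : 'I_(size S) := Ordinal (xS j).
exists (fun i => \sum_(j | p j == i) al j); split.
- by move=> i; apply: (O_sum HG Hnu).
- by rewrite -hsum (partition_big p predT).
rewrite (partition_big p predT) //; apply: eq_bigr => i _.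
by rewrite scaler_suml; apply: eq_bigr => j /eqP <-; rewrite /= nth_index.
Qed.

Lemma sum_scale_sub (I : finType) (c : I -> K) (s : I -> 'rV[K]_d) x :
  \sum_i c i *: (s i - x) = \sum_i c i *: s i - (\sum_i c i) *: x.
Proof. by rewrite scaler_suml -sumrB; apply: eq_bigr => i _; rewrite scalerBr. Qed.

Lemma conv_ospan (S : seq 'rV[K]_d) v : conv le nu (fun x => x \in S) 0 ->
  conv le nu (fun x => x \in S) v <->
  ospan le nu (fun i : 'I_(size S) => nth 0 S i - nth 0 S 0) v.
Proof.
move=> /conv_nth [a0 [ha0 hs0 e0]]; split.
  move=> /conv_nth [a [ha hs ->]]; exists (fun i => a i - a0 i); split.
    by move=> i; apply: (OB HG Hnu).
  rewrite sum_scale_sub sumrB hs hs0 subrr scale0r subr0.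
  by under [in RHS]eq_bigr do rewrite scalerBl; rewrite sumrB -e0 subr0.
move=> [b [hb ->]]; apply/conv_nth; set B := \sum_i b i.
pose i0 : 'I_(size S) := Ordinal (sum_eq1_gt0 hs0).
have sum_at_i0 (f : 'I_(size S) -> 'rV[K]_d) :
    \sum_i (if i == i0 then B else 0) *: f i = B *: f i0.
  rewrite (bigD1 i0) //= big1 => [|i /negbTE ->]; last by rewrite scale0r.
  by rewrite addr0.
exists (fun i => a0 i + b i - if i == i0 then B else 0); split.
- move=> i; apply: (OB HG Hnu); first exact: (OD HG Hnu).
  by case: ifP => _; [apply: (O_sum HG Hnu)|apply: (O0 Hnu)].
- by rewrite sumrB big_split /= hs0 -big_mkcond big_pred1_eq addrK.
under [in RHS]eq_bigr do rewrite scalerBl scalerDl.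
by rewrite sumrB big_split /= sum_at_i0 -e0 add0r sum_scale_sub.
Qed.

End ConvexHull.

Section Flags.
Variables (K : fieldType) (G : zmodType) (le : rel G) (nu : K -> option G).
Hypothesis HG : ordered_abelian_group le.
Hypothesis Hnu : is_valuation le nu.
Variable d : nat.

Notation ball := (@ball K G le nu d).
Notation supp := (@supp K d).
Implicit Types (J : {set 'I_d}) (F : nat -> {vspace 'rV[K]_d}) (ga : nat -> option G).

Definition flag_set F ga m (v : 'rV[K]_d) :=
  exists w : nat -> 'rV[K]_d,
    (forall i, (1 <= i <= m)%N ->
       w i \in F i /\ leE le (ga i) (nuKd le nu (w i))) /\
    v = \sum_(1 <= i < m.+1) w i.

Definition coord_flag J F m :=
  [/\ F 0%N = 0%VS,
      forall i, (1 <= i <= m)%N -> (F i.-1 <= F i)%VS /\ F i.-1 != F i,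
      forall i, (i <= m)%N -> forall x, x \in F i -> supp J x &
      forall x, supp J x -> x \in F m].

Definition flag_decomposition J m (M : 'rV[K]_d -> Prop) (b : option G) :=
  exists F ga, [/\ coord_flag J F m,
    forall i, (1 <= i < m)%N -> leE le (ga i) (ga i.+1),
    forall i, (1 <= i <= m)%N -> leE le b (ga i) &
    forall v, M v <-> flag_set F ga m v].

Section Prepend.
Variables (J : {set 'I_d}) (k : 'I_d) (v0 : 'rV[K]_d) (m : nat).
Variables (F : nat -> {vspace 'rV[K]_d}) (ga : nat -> option G) (g1 : option G).
Hypotheses (hv0 : supp J v0) (hv0k : v0 0 k != 0).
Hypothesis hpivot : forall i, leE le (nu (v0 0 k)) (nu (v0 0 i)).
Hypothesis hF : coord_flag (J :\ k) F m.

Definition flag_cons i := if i is i'.+1 then (<[v0]> + F i')%VS else 0%VS.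
Definition radii_cons i := if i is i'.+2 then ga i'.+1 else g1.

Lemma flag_coordk i x : (i <= m)%N -> x \in F i -> x 0 k = 0.
Proof. by case: hF => _ _ hsupp _ hi /(hsupp i hi); apply; rewrite !inE eqxx. Qed.

Lemma flag_cons_proj i x : (i <= m)%N -> x \in (<[v0]> + F i)%VS ->
  x - (x 0 k / v0 0 k) *: v0 \in F i.
Proof.
move=> hi /memv_addP [u /vlineP [mu ->] [y hy ->]].
have -> : (mu *: v0 + y) 0 k / v0 0 k = mu.
  by rewrite !mxE (flag_coordk hi hy) addr0 mulfK.
by rewrite addrC addKr.
Qed.

Lemma coord_flag_cons : coord_flag J flag_cons m.+1.
Proof.
have [F0 Fstrict Fsupp Ffull] := hF.
have v0_neq0 : v0 != 0 by apply: contraNneq hv0k => ->; rewrite mxE.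
split=> //.
- case=> [//|[|i]] /= hi.
    split; first exact: sub0v.
    apply: contraNneq v0_neq0 => F1_eq0.
    by rewrite -memv0 F1_eq0 F0 addv0 memv_line.
  have [sFF neqF] := Fstrict i.+1 hi; split; first exact: addvS.
  apply: contra neqF => /eqP eqF; rewrite eqEsubv sFF /=; apply/subvP => x hx.
  have hi' : (i.+1 <= m)%N := hi.
  have := @flag_cons_proj i x (ltnW hi'); rewrite eqF (flag_coordk hi' hx).
  by rewrite mul0r scale0r subr0; apply; apply: subvP (addvSr _ _) x hx.
- case=> [_ x|i hi x]; first by rewrite memv0 => /eqP ->; apply: supp0.
  move=> /memv_addP [u /vlineP [mu ->] [y hy ->]].
  exact: supp_line (subsetDl _ _) hv0 (Fsupp i hi y hy).
move=> x hx /=; rewrite -[x](addrNK ((x 0 k / v0 0 k) *: v0)) addrC.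
apply: memv_add; first by apply: memvZ; apply: memv_line.
by apply: Ffull; apply: supp_reduce.
Qed.

Hypothesis hga : forall i, (1 <= i <= m)%N -> leE le g1 (ga i).

Lemma flag_set_cons v :
  flag_set flag_cons radii_cons m.+1 v <->
  exists l m', [/\ ball g1 (l *: v0), flag_set F ga m m' & v = l *: v0 + m'].
Proof.
have F0 : F 0 = 0%VS by case: hF.
have g1_le i : (i <= m)%N -> leE le g1 (radii_cons i.+1).
  by case: i => [|i] hi; [apply: (leE_refl HG)|apply: hga].
split=> [[w [hw ->]]|[l [m' [hl [w [hw ->]] ->]]]].
  pose lam i := w i.+1 0 k / v0 0 k; pose y i := w i.+1 - lam i *: v0.
  have w_ball i : (i <= m)%N -> ball (radii_cons i.+1) (w i.+1).
    by move=> hi; apply/(ball_nuKd nu HG); apply: (hw i.+1 hi).2.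
  have lam_ball i : (i <= m)%N -> ball (radii_cons i.+1) (lam i *: v0).
    move=> hi; apply/(ball_pivot HG Hnu _ _ hpivot); rewrite /lam divfK //.
    exact: w_ball.
  have y_flag i : (i <= m)%N -> y i \in F i.
    by move=> hi; apply: flag_cons_proj => //; apply: (hw i.+1 hi).1.
  exists (\sum_(i < m.+1) lam i), (\sum_(1 <= i < m.+1) y i); split.
  - rewrite scaler_suml; apply: (ball_sum HG Hnu) => i.
    exact: (ball_le HG) (g1_le i (ltn_ord i)) (lam_ball i (ltn_ord i)).
  - exists y; split=> // i /andP [i_gt0 hi]; split; first exact: y_flag.
    apply/(ball_nuKd nu HG); case: i i_gt0 hi => // i _ hi.
    by apply: (ballB HG Hnu); [apply: w_ball|apply: lam_ball].
  have y0 : y 0%N = 0 by apply/eqP; rewrite -memv0 -F0 y_flag.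
  rewrite big_add1 scaler_suml -(big_mkord xpredT (fun i => lam i *: v0)).
  have -> : \sum_(1 <= i < m.+1) y i = \sum_(0 <= i < m.+1) y i.
    by rewrite [RHS]big_ltn // y0 add0r.
  rewrite -big_split /=.
  by apply: eq_bigr => i _; rewrite addrC subrK.
exists (fun i => if i == 1%N then l *: v0 else w i.-1); split.
  case=> [//|[|i]] hi /=.
    split; last exact/(ball_nuKd nu HG).
    by rewrite F0 addv0 memvZ ?memv_line.
  have [wF wb] := hw i.+1 hi; split=> //.
  by rewrite -[w _]add0r memv_add ?mem0v.
rewrite [RHS]big_ltn // [in RHS]big_add1 /=; congr (_ + _).
by apply: eq_big_nat => i /andP [i_gt0 _]; rewrite eqSS eqn0Ngt i_gt0.
Qed.

End Prepend.

Lemma flag_decomposition_cons J k m v0 g1 b (M M' : 'rV[K]_d -> Prop) :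
  supp J v0 -> v0 0 k != 0 ->
  (forall i, leE le (nu (v0 0 k)) (nu (v0 0 i))) -> leE le b g1 ->
  (forall v, M v <-> exists l m', [/\ ball g1 (l *: v0), M' m' & v = l *: v0 + m']) ->
  flag_decomposition (J :\ k) m M' g1 -> flag_decomposition J m.+1 M b.
Proof.
move=> hv0 hv0k hpivot hb hM [F [ga [hF ga_mono ga_ge hM']]].
exists (flag_cons v0 F), (radii_cons ga g1); split.
- exact: coord_flag_cons hv0 hv0k hF.
- by case=> [//|[|i]] /andP [_ hi] //=; [apply: ga_ge|apply: ga_mono].
- case=> [//|[|i]] /andP [_ hi] //=.
  by apply: (leE_trans HG) hb _; apply: ga_ge.
have cons_iff := flag_set_cons hv0k hpivot hF ga_ge.
move=> v; split=> [/hM [l [m' [hl /hM' hm' ->]]]|/cons_iff [l [m' [hl /hM' hm' ->]]]].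
  by apply/cons_iff; exists l, m'.
by apply/hM; exists l, m'.
Qed.

End Flags.

Section Elimination.
Variables (K : fieldType) (G : zmodType) (le : rel G) (nu : K -> option G).
Hypothesis HG : ordered_abelian_group le.
Hypothesis Hnu : is_valuation le nu.
Variable d : nat.

Notation ball := (@ball K G le nu d).
Notation supp := (@supp K d).
Notation ospan := (@ospan K G le nu d).
Notation flag_decomposition := (@flag_decomposition K G le nu d).

Definition ospans_decompose m := forall (J : {set 'I_d}), #|J| = m ->
  forall n (y : 'I_n -> 'rV[K]_d) b, (forall j, supp J (y j) /\ ball b (y j)) ->
  flag_decomposition J m (ospan y) b.

Lemma ospans_decompose0 : ospans_decompose 0.
Proof.
move=> J /cards0_eq -> n y b hy.
have y0 j : y j = 0 by apply: supp_set0; apply: (hy j).1.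
exists (fun _ => 0%VS), (fun _ => b); split=> //.
- split=> // [[]//|i _ x|x /supp_set0 ->]; last exact: mem0v.
  by rewrite memv0 => /eqP ->; apply: supp0.
- by move=> i _; apply: (leE_refl HG).
- by move=> i _; apply: (leE_refl HG).
move=> v; split=> [[a [_ ->]]|[w [_ ->]]]; last by rewrite big_geq //; apply: ospan0.
exists (fun _ => 0); split; first by case.
by rewrite big_geq // big1 // => j _; rewrite y0 scaler0.
Qed.

Section Step.
Variables (m : nat) (J : {set 'I_d}) (n : nat) (y : 'I_n -> 'rV[K]_d) (b : option G).
Hypotheses (IH : ospans_decompose m) (hJ : #|J| = m.+1).
Hypothesis hy : forall j, supp J (y j) /\ ball b (y j).

Lemma card_setD1_pred k : k \in J -> #|J :\ k| = m.
Proof. by move=> hk; move: hJ; rewrite (cardsD1 k J) hk => -[]. Qed.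

Lemma ospan_decompose_pivot j0 k : y j0 0 k != 0 ->
  (forall j i, leE le (nu (y j0 0 k)) (nu (y j 0 i))) ->
  flag_decomposition J m.+1 (ospan y) b.
Proof.
set v0 := y j0 => hv0k hmin.
have hk : k \in J by apply: contraNT hv0k => hk; apply/eqP; apply: (hy j0).1.
pose c j := y j 0 k / v0 0 k.
have hc j : val_ring le nu (c j).
  by apply/(val_ring_scale HG Hnu _ hv0k); rewrite divfK //; apply: hmin.
have ball_O l : ball (nu (v0 0 k)) (l *: v0) <-> val_ring le nu l.
  split=> [/(ball_pivot HG Hnu _ _ (hmin j0))/(val_ring_scale HG Hnu _ hv0k)|] //.
  by move/(val_ring_scale HG Hnu _ hv0k)/(ball_pivot HG Hnu _ _ (hmin j0)).
apply: (flag_decomposition_cons HG Hnu (M' := ospan (fun j => y j - c j *: v0))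
          (hy j0).1 hv0k (hmin j0) ((hy j0).2 k)).
  move=> v; split=> [/(ospan_reduce HG Hnu _ j0 _ hc) [l [m' [/ball_O hl hm ->]]]|].
    by exists l, m'.
  by move=> [l [m' [/ball_O hl hm ->]]]; apply/(ospan_reduce HG Hnu _ j0 _ hc); exists l, m'.
apply: IH (card_setD1_pred hk) _ _ _ _ => j; split.
  exact: supp_reduce (hy j).1 (hy j0).1 hv0k.
by apply: (ballB HG Hnu) (ballZ HG Hnu (hc j) (hmin j0)); apply: hmin.
Qed.

Lemma ospan_decompose_zero : (forall j, y j = 0) ->
  flag_decomposition J m.+1 (ospan y) b.
Proof.
move=> y0; have /set0Pn [k hk] : J != set0 by rewrite -card_gt0 hJ.
pose v0 : 'rV[K]_d := delta_mx 0 k.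
have v0E i : v0 0 i = (i == k)%:R by rewrite mxE eqxx.
have hv0 : supp J v0 by move=> i hi; rewrite v0E; case: eqP hi => // ->; rewrite hk.
have hv0k : v0 0 k != 0 by rewrite v0E eqxx oner_eq0.
apply: (flag_decomposition_cons HG Hnu (g1 := None) (M' := ospan y) hv0 hv0k).
- move=> i; rewrite !v0E eqxx; case: (i == k) => /=.
    by rewrite (nu1 Hnu); apply: (leE_refl HG).
  by rewrite (nu0 Hnu); case: (nu _).
- by case: b hy.
- move=> v; split=> [hv|[l [m' [/(ball_None Hnu) -> hm' ->]]]]; last by rewrite add0r.
  by exists 0, v; rewrite scale0r add0r; split=> //; apply: ball0.
apply: IH (card_setD1_pred hk) _ _ _ _ => j.
by rewrite y0; split; [apply: supp0|apply: ball0].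
Qed.

End Step.

Lemma ospans_decomposeS m : ospans_decompose m -> ospans_decompose m.+1.
Proof.
move=> IH J hJ n y b hy.
case: (pickP [pred p : 'I_n * 'I_d | y p.1 0 p.2 != 0]) => [p0 hp0|y0].
  have [[j0 k] hmin] := exists_min HG (fun p : 'I_n * 'I_d => nu (y p.1 0 p.2)) p0.
  apply: (ospan_decompose_pivot IH hJ hy (j0 := j0) (k := k)) => [|j i].
    apply: contra_neq hp0 => /(nu_eq0 Hnu) hk0.
    by apply/(nu_eq0 Hnu); move: (hmin p0); rewrite hk0; case: (nu _).
  exact: (hmin (j, i)).
apply: (ospan_decompose_zero IH hJ hy) => j; apply/matrixP => i0 i.
by rewrite ord1 mxE; apply/eqP; move: (y0 (j, i)) => /= /negbFE.
Qed.

Lemma ospans_decompose_all m : ospans_decompose m.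
Proof. by elim: m => [|m]; [apply: ospans_decompose0|apply: ospans_decomposeS]. Qed.

End Elimination.

Unset Implicit Arguments.
Set Strict Implicit.

Theorem corollary3p14 (K : fieldType) (G : zmodType) (le : rel G)
    (nu : K -> option G) (d : nat)
    (HG : ordered_abelian_group le) (Hnu : is_valuation le nu)
    (Hd : (1 <= d)%N) (C : 'rV[K]_d -> Prop)
    (HC : exists S : seq 'rV[K]_d,
        forall v, C v <-> conv le nu (fun y => y \in S) v)
    (H0 : C 0) :
  exists (F : nat -> {vspace 'rV[K]_d}) (gamma : nat -> option G),
    [/\ F 0%N = 0%VS,
        (forall i, (1 <= i <= d)%N -> (F i.-1 <= F i)%VS /\ F i.-1 != F i),
        F d = fullv,
        (forall i, (1 <= i < d)%N -> leE le (gamma i) (gamma i.+1)) &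
        forall v, C v <->
          exists w : nat -> 'rV[K]_d,
            (forall i, (1 <= i <= d)%N ->
                w i \in F i /\ leE le (gamma i) (nuKd le nu (w i))) /\
            v = \sum_(1 <= i < d.+1) w i].
Proof.
have [S hS] := HC; have S0 : conv le nu (fun y => y \in S) 0 by apply/hS.
pose y (i : 'I_(size S)) := nth 0 S i - nth 0 S 0.
have [b hb] := exists_lower_bound HG (fun p : 'I_(size S) * 'I_d => nu (y p.1 0 p.2)).
have hy j : supp [set: 'I_d] (y j) /\ ball le nu b (y j).
  by split=> [i|i]; [rewrite in_setT|apply: (hb (j, i))].
have cardT : #|[set: 'I_d]| = d by rewrite cardsT card_ord.
have [F [ga [[F0 Fstrict _ Ffull] ga_mono _ hM]]] :=
  ospans_decompose_all HG Hnu cardT hy.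
exists F, ga; split=> //.
  by apply/vspaceP => x; rewrite memvf; apply: Ffull => i; rewrite in_setT.
move=> v; rewrite -/(flag_set le nu F ga d v).
by split=> [/hS/(conv_ospan HG Hnu _ S0)/hM|/hM/(conv_ospan HG Hnu _ S0)/hS].
Qed.
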